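(* Let $n,t,m$ be positive integers, $m\ge 0$ allowed, let $\sigma\in\mathcal{S}_n$, and let $\sigma_e$ be obtained from $\sigma$ by a burst of stuck-at errors of length at most $t$ with threshold $m$ (as defined in the context). For $i\ge1$ let $B_{i,1}=\{2(i-1)t+1,\ldots,2it\}\cap[n]$ and $B_{i,2}=\{t+2(i-1)t+1,\ldots,t+2it\}\cap[n]$. Let $E_1$ be the set of $i\in[\lceil n/(2t)\rceil]$ such that at least one value in $B_{i,1}$ does not appear in $\sigma_e$, and $E_2$ the set of $i\in[\lceil (n-t)/(2t)\rceil]$ such that at least one value in $B_{i,2}$ does not appear in $\sigma_e$. Then $|E_1|\le1$ or $|E_2|\le 1$.
   Context: $[n]=\{1,\ldots,n\}$; $\mathcal{S}_n$ is the set of permutations of $[n]$ written as sequences. Burst of stuck-at errors of length at most $t$ with threshold $m$: $\sigma_e\in[n]^n$ is obtained from $\sigma$ if there exist $j\in[n]$, $t_1\in[t]$ and positions $i_1,\ldots,i_{t_1}$ with $\sigma(i_\ell)=j+\ell-1$ and $\sigma(i_\ell)>m$ for all $\ell\in[t_1]$, such that $\sigma_e(i_\ell)=j$ for all $\ell\in[t_1]$ and $\sigma_e(i)=\sigma(i)$ for all other $i$. *)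

From mathcomp Require Import all_boot.
Set Implicit Arguments. Unset Strict Implicit. Unset Printing Implicit Defensive.

(* Positions are 0-based (position p < n is the
   paper's position p+1); values are the paper's values. *)
Definition is_perm_seq (n : nat) (s : seq nat) : Prop := perm_eq s (iota 1 n).

(* The paper's index l in [t1] is written l+1 here,
   so the condition sigma(i_l) = j + l - 1 becomes nth sigma (pos l) = j + l. *)
Definition burst_stuck (n t m : nat) (sigma sigma_e : seq nat) : Prop :=
  size sigma_e = n /\
  exists (j t1 : nat) (pos : nat -> nat),
    [/\ 1 <= j <= n, 1 <= t1 <= t,
        (forall l, l < t1 ->
           [/\ pos l < n, nth 0 sigma (pos l) = j + l, m < nth 0 sigma (pos l)
             & nth 0 sigma_e (pos l) = j]) &
        (forall i, i < n -> (forall l, l < t1 -> i <> pos l) ->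
           nth 0 sigma_e i = nth 0 sigma i)].

Definition ceil_div (a b : nat) : nat := (a + b.-1) %/ b.

Definition B1 (n t i : nat) : seq nat :=
  [seq v <- iota ((i.-1) * (2 * t)).+1 (2 * t) | v <= n].
Definition B2 (n t i : nat) : seq nat :=
  [seq v <- iota (t + (i.-1) * (2 * t)).+1 (2 * t) | v <= n].

Definition missing (B sigma_e : seq nat) : bool :=
  has (fun v => v \notin sigma_e) B.

(* E_1 ⊆ [ceil(n/(2t))], E_2 ⊆ [ceil((n-t)/(2t))] (n - t truncated at 0;
   when n < t the real ceiling is 0 as well). *)
Definition E1 (n t : nat) (sigma_e : seq nat) : seq nat :=
  [seq i <- iota 1 (ceil_div n (2 * t)) | missing (B1 n t i) sigma_e].
Definition E2 (n t : nat) (sigma_e : seq nat) : seq nat :=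
  [seq i <- iota 1 (ceil_div (n - t) (2 * t)) | missing (B2 n t i) sigma_e].

From mathcomp Require Import all_boot.
From mathcomp Require Import zify.

(* A stuck-at burst only erases values j+1, ..., j+t1-1 (the values j+l it
   overwrites by j, except j itself), so every value missing from sigma_e lies
   in the open window (j, j+t).  If two blocks of one family both contain a
   missing value, the window contains the boundary after the first of them.
   The boundaries of the B1 blocks are the multiples of 2t, those of the B2
   blocks the odd multiples of t; a window of t-1 consecutive integers cannot
   contain one of each, so one of the families has at most one bad block. *)

Lemma burst_stuck_window (n t m : nat) (sigma sigma_e : seq nat) :
  is_perm_seq n sigma -> burst_stuck n t m sigma sigma_e ->
  exists j, forall v, 0 < v <= n -> v \notin sigma_e -> j < v < j + t.
Proof.
move=> hp [se_sz [j [t1 [pos [_ /andP [t1_gt0 t1_le] hpos hrest]]]]].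
exists j => v v_range v_out.
have [pos0_lt _ _ se_pos0] := hpos 0 t1_gt0.
have j_in : j \in sigma_e by rewrite -se_pos0 mem_nth ?se_sz.
have v_in : v \in sigma by rewrite (perm_mem hp) mem_iota; lia.
set p := index v sigma.
have p_lt : p < n by rewrite -[n](size_iota 1) -(perm_size hp) index_mem.
have sigma_p : nth 0 sigma p = v by rewrite nth_index.
have [/hasP [l] | unchanged] := boolP (has (fun l => p == pos l) (iota 0 t1)).
  rewrite mem_iota add0n => l_lt /eqP p_eq.
  have [_ v_eq _ _] := hpos l l_lt; rewrite -p_eq sigma_p in v_eq.
  have : v != j by apply: contraNneq v_out => ->.
  lia.
have se_p : nth 0 sigma_e p = v.
  rewrite hrest // => l l_lt p_eq; move/hasP: unchanged; apply.
  by exists l; rewrite ?mem_iota ?p_eq.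
by move: v_out; rewrite -se_p mem_nth ?se_sz.
Qed.

(* [B1 n t i] is [block n t 0 i] and [B2 n t i] is [block n t t i], up to conversion. *)
Definition block (n t o i : nat) : seq nat :=
  [seq v <- iota (o + i.-1 * (2 * t)).+1 (2 * t) | v <= n].

Definition missing_blocks (n t o N : nat) (sigma_e : seq nat) : seq nat :=
  [seq i <- iota 1 N | missing (block n t o i) sigma_e].

Lemma mem_block (n t o i v : nat) : v \in block n t o i ->
  [/\ 0 < v <= n, o + i.-1 * (2 * t) < v & v <= o + i.-1 * (2 * t) + 2 * t].
Proof.
rewrite mem_filter mem_iota; move: (i.-1 * (2 * t)) => lo.
by move=> /andP [? /andP [? ?]]; split; lia.
Qed.

Lemma sorted_ltn_two (s : seq nat) : sorted ltn s -> 1 < size s ->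
  exists i1 i2, [/\ i1 < i2, i1 \in s & i2 \in s].
Proof.
case: s => [|i1 [|i2 s]] //= /andP [lt12 _] _.
by exists i1, i2; rewrite lt12 mem_head !inE eqxx orbT.
Qed.

Lemma missing_blocks_boundary (n t o N j : nat) (sigma_e : seq nat) :
  (forall v, 0 < v <= n -> v \notin sigma_e -> j < v < j + t) ->
  1 < size (missing_blocks n t o N sigma_e) ->
  exists k, j < o + k * (2 * t) < j + t.
Proof.
move=> window two_bad.
have sorted_bad : sorted ltn (missing_blocks n t o N sigma_e).
  by apply: sorted_filter; [exact: ltn_trans | exact: iota_ltn_sorted].
have [i1 [i2 [lt12]]] := sorted_ltn_two _ sorted_bad two_bad.
rewrite !mem_filter mem_iota => /andP [/hasP [v1 /mem_block [v1_range _ v1_hi] v1_out]].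
move=> /andP [i1_gt0 _] /andP [/hasP [v2 /mem_block [v2_range v2_lo _] v2_out] _].
have := window v1 v1_range v1_out; have := window v2 v2_range v2_out.
have : i1.-1.+1 * (2 * t) <= i2.-1 * (2 * t) by rewrite leq_mul2r; lia.
by rewrite mulSnr; exists i1.-1.+1; lia.
Qed.

Lemma boundaries_apart (j t a b : nat) :
  j < a * (2 * t) < j + t -> j < t + b * (2 * t) < j + t -> False.
Proof.
case: (leqP a b) => ab.
  by have := leq_mul ab (leqnn (2 * t)); lia.
by have := leq_mul ab (leqnn (2 * t)); rewrite mulSn; lia.
Qed.

Theorem lemma3 (n t m : nat) (sigma sigma_e : seq nat) :
  0 < n -> 0 < t ->
  is_perm_seq n sigma ->
  burst_stuck n t m sigma sigma_e ->
  size (E1 n t sigma_e) <= 1 \/ size (E2 n t sigma_e) <= 1.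
Proof.
move=> _ _ hp hb.
have [j window] := burst_stuck_window _ _ _ _ _ hp hb.
case: (leqP (size (E1 n t sigma_e)) 1) => [|two_bad1]; first by left.
case: (leqP (size (E2 n t sigma_e)) 1) => [|two_bad2]; first by right.
have [a a_in] := missing_blocks_boundary n t 0 _ _ _ window two_bad1.
have [b b_in] := missing_blocks_boundary n t t _ _ _ window two_bad2.
by case: (boundaries_apart _ _ _ _ a_in b_in).
Qed.
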